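(* Let $E/F$ be a degree-4 datum (notation $\rho,\zeta,v,u,L,\theta$ as below), let $\xi_\alpha,\xi_\beta,\xi_\gamma\in\mathbb Z/2\mathbb Z$ with $\xi_\alpha+\xi_\beta+\xi_\gamma=0$, and let $l\in\{0,1\}$ with $l\equiv\xi_\beta\pmod 2$ (so $\rho^l|_L=\rho^{l+2}|_L=\theta^{\xi_\beta}$). Let $Q$ be the quiver with vertices $1,2,3$ and arrows $\alpha:2\to1$, $\beta_0,\beta_1:3\to2$, $\gamma:1\to3$, with fields $F_1=L$, $F_2=F_3=E$ and bimodules $A_\alpha=L^{\theta^{\xi_\alpha}}\otimes_LE$, $A_{\beta_0}=E^{\rho^l}\otimes_EE$, $A_{\beta_1}=E^{\rho^{l+2}}\otimes_EE$, $A_\gamma=E^{\theta^{\xi_\gamma}}\otimes_LL$. Let $$\Lambda'=T_R(A)\big/\big\langle (\beta_0+\beta_1)\gamma,\ \tfrac12(\gamma\alpha+\rho^{-l}(v^{-1})\gamma\alpha v),\ \tfrac12(\gamma\alpha+\rho^{-l-2}(v^{-1})\gamma\alpha v),\ \alpha(\beta_0+\beta_1)\big\rangle$$ (here $v$ on the right is $ve_2\in F_2$ and $\rho^{-l}(v^{-1})$, $\rho^{-l-2}(v^{-1})$ lie in $F_3$). Let $\widehat Q$ be the quiver with vertices $1,2,3$, arrows $\alpha:2\to1$, $\beta:3\to2$, $\gamma:1\to3$ and loops $s_2$ at $2$, $s_3$ at $3$; let $K=L$, $\sigma_\alpha=\theta^{\xi_\alpha}$, $\sigma_\beta=\theta^{\xi_\beta}$,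 $\sigma_\gamma=\theta^{\xi_\gamma}$, $\sigma_{s_2}=\sigma_{s_3}=1_L$, and $\Lambda=L_{\boldsymbol\sigma}\widehat Q/\langle\alpha\beta,\beta\gamma,\gamma\alpha,\ s_2^2-ue_2,\ s_3^2-ue_3\rangle$. Then $\Lambda'$ and $\Lambda$ are isomorphic as $F$-algebras (via an isomorphism sending $ve_2\mapsto s_2$, $ve_3\mapsto s_3$, $\alpha\mapsto\alpha$, $\gamma\mapsto\gamma$, $\beta_0+\beta_1\mapsto\beta$).
   Context: Degree-4 datum: a cyclic Galois extension $E/F$ of degree 4 with $F$ containing a primitive 4th root of unity $\zeta$; $\rho$ is a generator of $\operatorname{Gal}(E/F)$, $v\in E\setminus\{0\}$ satisfies $\rho(v)=\zeta v$, $u:=v^2$, $L:=F(u)$ is the unique intermediate field with $[L:F]=2$, and $\theta:=\rho|_L$ generates $\operatorname{Gal}(L/F)$. Twisted bimodules: for fields $K'''\subseteq K',K''$ and an automorphism $g$ of $K'''$, $K'^{g}\otimes_{K'''}K''$ is the $K'$-$K''$-bimodule where $K'^g$ is $K'$ with left multiplication and right action $m\star z=m\,g(z)$. Tensor ring of a species: for a quiver $Q$ with fields $F_i$ at vertices and bimodules $A_a=F_{h(a)}^{g_a}\otimes_{F_{h(a)}\cap F_{t(a)}}F_{t(a)}$ for arrows $a:t(a)\to h(a)$, $R=\prod_iF_i$ (idempotents $e_i$), $A=\bigoplus_aA_a$, $T_R(A)=\bigoplus_{n\ge0}A^{\otimes_Rn}$. The symbol $a$ denotes $1\otimes1\in A_a$;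 products are written right-to-left ($ab$ = $b$ then $a$); $az=g_a(z)a$ for $z\in F_{h(a)}\cap F_{t(a)}$; field elements adjacent to arrows are elements of $R$ at the corresponding vertex. $\langle X\rangle$ is the two-sided ideal generated by $X$. Semilinear path algebra: for a quiver $\widehat Q$, a field $K$ and $\sigma_b\in\operatorname{Gal}(K/F)$ for arrows $b$, $K_{\boldsymbol\sigma}\widehat Q$ is the ring generated by $S=\prod_{i\in\widehat Q_0}K$ (idempotents $e_i$) and arrows $b=e_{h(b)}be_{t(b)}$ subject to $b\lambda=\sigma_b(\lambda)b$ for $\lambda\in K$ (the tensor ring over $S$ of $\bigoplus_bK^{\sigma_b}\otimes_KK$); products right-to-left. *)

From HB Require Import structures.
From mathcomp Require Import all_boot all_order all_algebra all_fingroup all_field.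
Set Implicit Arguments. Unset Strict Implicit. Unset Printing Implicit Defensive.
Import GRing.Theory.
Local Open Scope ring_scope.

Definition falg_hom (F : fieldType) (A B : algType F) (f : A -> B) : Prop :=
  [/\ forall x y, f (x + y) = f x + f y,
      forall x y, f (x * y) = f x * f y,
      f 1 = 1 &
      forall (c : F) x, f (c *: x) = c *: f x].

Definition degree4_datum (F : fieldType) (E : splittingFieldType F)
    (rho : gal_of (fullv : {vspace E})) (zeta : F) (v : E) : Prop :=
  [/\ galois 1%VS (fullv : {vspace E}), \dim (fullv : {vspace E}) = 4%N &
      ('Gal((fullv : {vspace E}) / 1%VS) = <[rho]>)%g] /\
  [/\ 4.-primitive_root zeta, v != 0 & rho v = zeta%:A * v].

Definition uu (F : fieldType) (E : splittingFieldType F) (v : E) : E := v ^+ 2.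
Definition LL (F : fieldType) (E : splittingFieldType F) (v : E) : {vspace E} :=
  <<1%VS; uu v>>%VS.

(* A unital F-linear ring map from the vertex field K (subfield of E) into C;
   only its values on K matter.  phi 1 is the vertex idempotent. *)
Definition vertex_map (F : fieldType) (E : splittingFieldType F)
    (K : {vspace E}) (C : algType F) (phi : E -> C) : Prop :=
  [/\ {in K &, forall x y, phi (x + y) = phi x + phi y},
      {in K &, forall x y, phi (x * y) = phi x * phi y} &
      forall c : F, phi (c%:A) = c *: phi 1].

Definition complete_idems (F : fieldType) (C : algType F) (e1 e2 e3 : C) : Prop :=
  [/\ e1 * e2 = 0, e1 * e3 = 0, e2 * e1 = 0 & e2 * e3 = 0] /\
  [/\ e3 * e1 = 0, e3 * e2 = 0 & e1 + e2 + e3 = 1].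

(* Images of the generators of Lambda' in an F-algebra C:
   vertex fields F_1 = L, F_2 = F_3 = E, arrows alpha, beta0, beta1, gamma. *)
Record gens1 (F : fieldType) (E : splittingFieldType F) (C : algType F) := Gens1 {
  p1 : E -> C; p2 : E -> C; p3 : E -> C;
  ar_a : C; ar_b0 : C; ar_b1 : C; ar_g : C }.

Definition rels1 (F : fieldType) (E : splittingFieldType F) (rho : gal_of (fullv : {vspace E}))
    (v : E) (xa xb xg : 'Z_2) (l : nat) (C : algType F) (d : gens1 E C) : Prop :=
  let L := LL v in
  let e1 := p1 d 1 in let e2 := p2 d 1 in let e3 := p3 d 1 in
  let a := ar_a d in let b0 := ar_b0 d in let b1 := ar_b1 d in let g := ar_g d in
  [/\ [/\ vertex_map L (p1 d), vertex_map (fullv : {vspace E}) (p2 d), vertex_map (fullv : {vspace E}) (p3 d)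
        & complete_idems e1 e2 e3],
      [/\ a = e1 * a * e2, b0 = e2 * b0 * e3, b1 = e2 * b1 * e3 & g = e3 * g * e1],
      [/\ {in L, forall z, a * p2 d z = p1 d ((rho ^+ xa)%g z) * a},
          forall z, b0 * p3 d z = p2 d ((rho ^+ l)%g z) * b0,
          forall z, b1 * p3 d z = p2 d ((rho ^+ (l + 2))%g z) * b1 &
          {in L, forall z, g * p1 d z = p3 d ((rho ^+ xg)%g z) * g}] &
      [/\ (b0 + b1) * g = 0,
          p3 d (2%:R^-1) * (g * a + p3 d (((rho ^+ l)^-1)%g (v^-1)) * g * a * p2 d v) = 0,
          p3 d (2%:R^-1) * (g * a + p3 d (((rho ^+ (l + 2))^-1)%g (v^-1)) * g * a * p2 d v) = 0
        & a * (b0 + b1) = 0]].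

Definition agree1 (F : fieldType) (E : splittingFieldType F) (v : E)
    (B C : algType F) (h : B -> C) (dB : gens1 E B) (dC : gens1 E C) : Prop :=
  [/\ {in LL v, forall x, h (p1 dB x) = p1 dC x},
      forall x, h (p2 dB x) = p2 dC x,
      forall x, h (p3 dB x) = p3 dC x &
      [/\ h (ar_a dB) = ar_a dC, h (ar_b0 dB) = ar_b0 dC,
          h (ar_b1 dB) = ar_b1 dC & h (ar_g dB) = ar_g dC]].

(* (B, dB) is the F-algebra presented by the generators and relations of Lambda'
   (universal property of T_R(A)/I). *)
Definition is_Lambda' (F : fieldType) (E : splittingFieldType F) (rho : gal_of (fullv : {vspace E}))
    (v : E) (xa xb xg : 'Z_2) (l : nat) (B : algType F) (dB : gens1 E B) : Prop :=
  rels1 rho v xa xb xg l dB /\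
  forall (C : algType F) (dC : gens1 E C), rels1 rho v xa xb xg l dC ->
    (exists h : B -> C, falg_hom h /\ agree1 v h dB dC) /\
    (forall h1 h2 : B -> C, falg_hom h1 -> agree1 v h1 dB dC ->
        falg_hom h2 -> agree1 v h2 dB dC -> h1 =1 h2).

Record gens2 (F : fieldType) (E : splittingFieldType F) (C : algType F) := Gens2 {
  q1 : E -> C; q2 : E -> C; q3 : E -> C;
  br_a : C; br_b : C; br_g : C; br_s2 : C; br_s3 : C }.

Definition rels2 (F : fieldType) (E : splittingFieldType F) (rho : gal_of (fullv : {vspace E}))
    (v : E) (xa xb xg : 'Z_2) (C : algType F) (d : gens2 E C) : Prop :=
  let L := LL v in
  let e1 := q1 d 1 in let e2 := q2 d 1 in let e3 := q3 d 1 in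
  let a := br_a d in let b := br_b d in let g := br_g d in
  let s2 := br_s2 d in let s3 := br_s3 d in
  [/\ [/\ vertex_map L (q1 d), vertex_map L (q2 d), vertex_map L (q3 d)
        & complete_idems e1 e2 e3],
      [/\ a = e1 * a * e2, b = e2 * b * e3, g = e3 * g * e1,
          s2 = e2 * s2 * e2 & s3 = e3 * s3 * e3],
      [/\ {in L, forall z, a * q2 d z = q1 d ((rho ^+ xa)%g z) * a},
          {in L, forall z, b * q3 d z = q2 d ((rho ^+ xb)%g z) * b},
          {in L, forall z, g * q1 d z = q3 d ((rho ^+ xg)%g z) * g},
          {in L, forall z, s2 * q2 d z = q2 d z * s2} &
          {in L, forall z, s3 * q3 d z = q3 d z * s3}] &
      [/\ a * b = 0, b * g = 0, g * a = 0,
          s2 * s2 - q2 d (uu v) = 0 & s3 * s3 - q3 d (uu v) = 0]].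

Definition agree2 (F : fieldType) (E : splittingFieldType F) (v : E)
    (B C : algType F) (h : B -> C) (dB : gens2 E B) (dC : gens2 E C) : Prop :=
  [/\ {in LL v, forall x, h (q1 dB x) = q1 dC x},
      {in LL v, forall x, h (q2 dB x) = q2 dC x},
      {in LL v, forall x, h (q3 dB x) = q3 dC x} &
      [/\ h (br_a dB) = br_a dC, h (br_b dB) = br_b dC, h (br_g dB) = br_g dC,
          h (br_s2 dB) = br_s2 dC & h (br_s3 dB) = br_s3 dC]].

Definition is_Lambda (F : fieldType) (E : splittingFieldType F) (rho : gal_of (fullv : {vspace E}))
    (v : E) (xa xb xg : 'Z_2) (B : algType F) (dB : gens2 E B) : Prop :=
  rels2 rho v xa xb xg dB /\
  forall (C : algType F) (dC : gens2 E C), rels2 rho v xa xb xg dC ->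
    (exists h : B -> C, falg_hom h /\ agree2 v h dB dC) /\
    (forall h1 h2 : B -> C, falg_hom h1 -> agree2 v h1 dB dC ->
        falg_hom h2 -> agree2 v h2 dB dC -> h1 =1 h2).

From mathcomp Require Import all_boot all_algebra all_fingroup all_field.
From mathcomp Require Import ring.
Import GRing.Theory.
Local Open Scope ring_scope.
Set Implicit Arguments. Unset Strict Implicit. Unset Printing Implicit Defensive.

(* In Lambda' the two averaged relations differ only in the sign of their
   second summand, since rho^(-l-2)(v^-1) = - rho^(-l)(v^-1); together they say
   gamma alpha = 0.  Hence the generators of Lambda', with beta := beta0 + beta1
   and s_i := v e_i, satisfy the relations of Lambda.  Conversely, 1, v, v^2, v^3
   are eigenvectors of rho for distinct eigenvalues, hence a basis of E, and
   c := v^4 lies in F, so E = F[X]/(X^4 - c): inside Lambda the square root s_i of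
   u e_i extends the vertex map of L at i to one of E.  The arrow beta splits as
   beta0 + beta1 into its components on which beta s3 = +-zeta^l s2 beta, which
   gives the rho^l- and rho^(l+2)-semilinearity of beta0 and beta1.  The two
   homomorphisms provided by the universal properties fix the generators, hence
   are mutually inverse. *)

Lemma sum_expr_unity (R : idomainType) n (x : R) : x ^+ n = 1 ->
  \sum_(j < n) x ^+ j = if x == 1 then n%:R else 0.
Proof.
move=> xn1; have [->|x_neq1] := eqVneq x 1.
  by rewrite (eq_bigr (fun _ => 1)) => [|j _]; rewrite ?expr1n // sumr_const card_ord.
have : (x - 1) * \sum_(j < n) x ^+ j = 0 by rewrite -subrX1 xn1 subrr.
by move/eqP; rewrite mulf_eq0 subr_eq0 (negPf x_neq1) => /eqP.
Qed.

Definition pow_tuple (R : pzRingType) (v : R) n : n.-tuple R := [tuple v ^+ i | i < n].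

Lemma pow_tupleE (R : pzRingType) (v : R) n (i : 'I_n) : (pow_tuple v n)`_i = v ^+ i.
Proof. by rewrite -tnth_nth tnth_mktuple. Qed.

Lemma horner_alg_comb (F : fieldType) (A : algType F) (s : A) n (a : 'I_n -> F) :
  horner_alg s (\sum_(i < n) a i *: 'X^i) = \sum_(i < n) a i *: s ^+ i.
Proof.
rewrite linear_sum; apply: eq_bigr => i _.
by rewrite linearZ /= mulr_algl rmorphXn /= horner_algX.
Qed.

Lemma corner_idem (R : pzRingType) (e f x : R) :
  e * e = e -> f * f = f -> x = e * x * f -> e * x = x /\ x * f = x.
Proof. by move=> ee ff ->; rewrite !mulrA ee -!mulrA ff. Qed.

Section FalgHom.
Variables (F : fieldType) (A C : algType F) (f : A -> C).
Hypothesis f_hom : falg_hom f.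

Lemma falg_homD x y : f (x + y) = f x + f y. Proof. by case: f_hom. Qed.
Lemma falg_homM x y : f (x * y) = f x * f y. Proof. by case: f_hom. Qed.
Lemma falg_hom1 : f 1 = 1. Proof. by case: f_hom. Qed.
Lemma falg_homZ c x : f (c *: x) = c *: f x. Proof. by case: f_hom. Qed.
Lemma falg_hom0 : f 0 = 0. Proof. by rewrite -(scale0r 0) falg_homZ scale0r. Qed.

Lemma falg_hom_sum I r (P : pred I) (g : I -> A) :
  f (\sum_(i <- r | P i) g i) = \sum_(i <- r | P i) f (g i).
Proof. exact: (big_morph f falg_homD falg_hom0). Qed.

Lemma falg_homX x i : f (x ^+ i) = f x ^+ i.
Proof. by elim: i => [|i IHi]; rewrite ?falg_hom1 // !exprS falg_homM IHi. Qed.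

End FalgHom.

Lemma falg_hom_comp (F : fieldType) (A B C : algType F) (f : A -> B) (g : B -> C) :
  falg_hom f -> falg_hom g -> falg_hom (g \o f).
Proof.
move=> f_hom g_hom; split=> [x y|x y||a x] /=.
- by rewrite !falg_homD.
- by rewrite !falg_homM.
- by rewrite !falg_hom1.
- by rewrite !falg_homZ.
Qed.

Section VertexMap.
Variables (F : fieldType) (E : splittingFieldType F) (C : algType F) (psi : E -> C).

Lemma vertex_map_sub (K : {vspace E}) :
  vertex_map fullv psi -> vertex_map K psi.
Proof. by case=> psiD psiM psiA; split=> // x y _ _; rewrite ?psiD ?psiM ?memvf. Qed.

Section Subspace.
Variable K : {vspace E}.
Hypotheses (psi_vm : vertex_map K psi) (K1 : 1 \in K).

Lemma vertex_map1l z : z \in K -> psi 1 * psi z = psi z.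
Proof. by case: psi_vm => _ psiM _ Kz; rewrite -psiM ?mul1r. Qed.

Lemma vertex_map_idem : psi 1 * psi 1 = psi 1.
Proof. exact: vertex_map1l. Qed.

Lemma vertex_map1r z : z \in K -> psi z * psi 1 = psi z.
Proof. by case: psi_vm => _ psiM _ Kz; rewrite -psiM ?mulr1. Qed.

Lemma vertex_mapZ a z : z \in K -> psi (a *: z) = a *: psi z.
Proof.
case: psi_vm => _ psiM psiA Kz.
by rewrite -mulr_algl psiM ?rpredZ // psiA -scalerAl vertex_map1l.
Qed.

End Subspace.

Section Full.
Hypothesis psi_vm : vertex_map fullv psi.

Lemma vertex_mapD x y : psi (x + y) = psi x + psi y.
Proof. by case: psi_vm => psiD _ _; rewrite psiD ?memvf. Qed.

Lemma vertex_mapM x y : psi (x * y) = psi x * psi y.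
Proof. by case: psi_vm => _ psiM _; rewrite psiM ?memvf. Qed.

Lemma vertex_map0 : psi 0 = 0.
Proof. by rewrite -(scale0r 0) (vertex_mapZ psi_vm) ?memvf // scale0r. Qed.

Lemma vertex_mapN x : psi (- x) = - psi x.
Proof. by apply/eqP; rewrite -subr_eq0 opprK -vertex_mapD addNr vertex_map0. Qed.

Lemma vertex_map_sum I r (P : pred I) (g : I -> E) :
  psi (\sum_(i <- r | P i) g i) = \sum_(i <- r | P i) psi (g i).
Proof. exact: (big_morph psi vertex_mapD vertex_map0). Qed.

Lemma vertex_mapX x i : psi (x ^+ i) = psi 1 * psi x ^+ i.
Proof.
elim: i => [|i IHi]; first by rewrite !expr0 mulr1.
by rewrite exprSr vertex_mapM IHi exprSr mulrA.
Qed.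

Lemma vertex_map1X x i : psi 1 * psi x ^+ i = psi x ^+ i * psi 1.
Proof.
elim: i => [|i IHi]; first by rewrite !expr0 mulr1 mul1r.
by rewrite exprSr mulrA IHi -!mulrA !(vertex_map1l psi_vm, vertex_map1r psi_vm) ?memvf.
Qed.

End Full.
End VertexMap.

Section GaloisEigenvector.
Variables (F : fieldType) (E : splittingFieldType F).
Variables (g : gal_of (fullv : {vspace E})) (n : nat) (w : F) (v : E).
Hypotheses (w_prim : n.-primitive_root w) (v_neq0 : v != 0) (gv : g v = w%:A * v).

Lemma gal_expg_eigen k : (g ^+ k)%g v = (w ^+ k)%:A * v.
Proof.
elim: k => [|k IHk]; first by rewrite expg0 gal_id expr0 scale1r mul1r.
by rewrite expgS galM ?memvf // gv rmorphM /= rmorph_alg IHk !mulr_algl scalerA -exprS.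
Qed.

Lemma free_pow_eigen : free (pow_tuple v n).
Proof.
apply/freeP => k sum_eq0 i.
have conj_eq0 j : \sum_(m < n) (k m * (w ^+ j) ^+ m) *: v ^+ m = 0.
  transitivity ((g ^+ j)%g (\sum_(m < n) k m *: (pow_tuple v n)`_m)).
    rewrite linear_sum; apply: eq_bigr => m _.
    rewrite pow_tupleE linearZ /= rmorphXn /= gal_expg_eigen.
    by rewrite mulr_algl exprZn scalerA.
  by rewrite sum_eq0 rmorph0.
(* Fourier inversion: weighting the image under g^j by w^(-ij) and summing
   over j isolates the i-th coefficient. *)
have fourier : 0 = \sum_(m < n) (k m * \sum_(j < n) (w ^+ m / w ^+ i) ^+ j) *: v ^+ m.
  transitivity (\sum_(j < n) w ^- i ^+ j *: \sum_(m < n) (k m * w ^+ j ^+ m) *: v ^+ m).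
    by rewrite big1 // => j _; rewrite conj_eq0 scaler0.
  under eq_bigr do rewrite scaler_sumr.
  rewrite exchange_big /=; apply: eq_bigr => m _.
  rewrite mulr_sumr scaler_suml; apply: eq_bigr => j _.
  by rewrite scalerA mulrCA exprMn [_ * _ ^+ j]mulrC exprAC.
have w_neq0 j : w ^+ j != 0.
  by rewrite expf_neq0 // (prim_root_eq0 w_prim) -lt0n (prim_order_gt0 w_prim).
have ratio_unity (m : 'I_n) : (w ^+ m / w ^+ i) ^+ n = 1.
  rewrite exprMn exprVn exprAC [(w ^+ i) ^+ n]exprAC (prim_expr_order w_prim).
  by rewrite !expr1n invr1 mulr1.
have ratio_eq1 (m : 'I_n) : (w ^+ m / w ^+ i == 1) = (m == i).
  rewrite -(inj_eq (mulIf (w_neq0 i))) divfK // mul1r (eq_prim_root_expr w_prim).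
  by rewrite !modn_small.
move/esym: fourier; rewrite (bigD1 i) //= [X in _ + X]big1 => [|m m_neq_i]; last first.
  by rewrite sum_expr_unity // ratio_eq1 (negPf m_neq_i) mulr0 scale0r.
rewrite sum_expr_unity // ratio_eq1 eqxx addr0 => /eqP.
by rewrite scaler_eq0 mulf_eq0 expf_eq0 (negPf v_neq0) andbF orbF
  (negPf (prim_root_natf_neq0 w_prim)) orbF => /eqP.
Qed.
End GaloisEigenvector.

Section PowerBasis.
Variables (F : fieldType) (E : splittingFieldType F) (v : E) (n : nat).
Hypothesis pow_basis : basis_of fullv (pow_tuple v n).
Local Notation X := (pow_tuple v n).

Lemma coord_powE x : x = \sum_(i < n) coord X i x *: v ^+ i.
Proof.
by rewrite {1}(coord_basis pow_basis (memvf x)); apply: eq_bigr => i _; rewrite pow_tupleE.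
Qed.

Lemma coord_pow_sum (a : 'I_n -> F) j : coord X j (\sum_(i < n) a i *: v ^+ i) = a j.
Proof.
rewrite -(coord_sum_free a j (basis_free pow_basis)); congr coord.
by apply: eq_bigr => i _; rewrite pow_tupleE.
Qed.

Lemma coord_pow_eigen (g : gal_of (fullv : {vspace E})) (w : F) :
  g v = w%:A * v -> forall z i, coord X i (g z) = coord X i z * w ^+ i.
Proof.
move=> gv z i; rewrite {1}(coord_powE z) linear_sum.
under eq_bigr do rewrite linearZ /= rmorphXn /= gv mulr_algl exprZn scalerA.
by rewrite coord_pow_sum.
Qed.

Lemma vertex_map_powE (C : algType F) (psi : E -> C) : vertex_map fullv psi ->
  forall x, psi x = \sum_(i < n) coord X i x *: (psi 1 * psi v ^+ i).
Proof.
move=> psi_vm x; rewrite {1}(coord_powE x) (vertex_map_sum psi_vm).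
by apply: eq_bigr => i _; rewrite (vertex_mapZ psi_vm) ?memvf // (vertex_mapX psi_vm).
Qed.

Lemma vertex_map_twist (C : algType F) (g : gal_of (fullv : {vspace E})) (w : F)
    (psi2 psi3 : E -> C) (b : C) :
  g v = w%:A * v -> vertex_map fullv psi2 -> vertex_map fullv psi3 ->
  psi2 1 * b = b -> b * psi3 1 = b -> b * psi3 v = w *: (psi2 v * b) ->
  forall z, b * psi3 z = psi2 (g z) * b.
Proof.
move=> gv psi2_vm psi3_vm b2 b3 bv z.
have bvX i : b * psi3 v ^+ i = w ^+ i *: (psi2 v ^+ i * b).
  elim: i => [|i IHi]; first by rewrite !expr0 mulr1 mul1r scale1r.
  by rewrite exprSr mulrA IHi -scalerAl -mulrA bv -scalerAr scalerA -exprSr mulrA -exprSr.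
rewrite (vertex_map_powE psi3_vm) (vertex_map_powE psi2_vm) mulr_sumr mulr_suml.
apply: eq_bigr => i _.
rewrite -scalerAr -scalerAl mulrA b3 bvX (vertex_map1X psi2_vm) -mulrA b2 scalerA.
by rewrite (coord_pow_eigen gv) mulrC.
Qed.

Definition coord_poly x : {poly F} := \sum_(i < n) coord X i x *: 'X^i.

Lemma horner_coord_poly_pow x : horner_alg v (coord_poly x) = x.
Proof. by rewrite horner_alg_comb -coord_powE. Qed.

Lemma coord_poly_unique (p : {poly F}) x :
  (size p <= n)%N -> horner_alg v p = x -> p = coord_poly x.
Proof.
move=> size_p px.
have p_sum : p = \sum_(i < n) p`_i *: 'X^i.
  rewrite -poly_def; apply/polyP => j; rewrite coef_poly.
  by case: ltnP => // /(leq_trans size_p) /(nth_default 0) ->.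
have x_sum : x = \sum_(i < n) p`_i *: v ^+ i.
  by rewrite -px {1}p_sum horner_alg_comb.
by rewrite {1}p_sum; apply: eq_bigr => i _; rewrite x_sum coord_pow_sum.
Qed.

Lemma coord_polyD x y : coord_poly (x + y) = coord_poly x + coord_poly y.
Proof. by rewrite /coord_poly -big_split; apply: eq_bigr => i _; rewrite linearD scalerDl. Qed.

Lemma coord_poly0 : coord_poly 0 = 0.
Proof. by rewrite /coord_poly big1 // => i _; rewrite linear0 scale0r. Qed.

Variable c : F.
Hypotheses (n_gt1 : (1 < n)%N) (vn : v ^+ n = c%:A).

Lemma coord_poly_alg a : coord_poly a%:A = a%:P.
Proof.
apply/esym/coord_poly_unique; last by rewrite horner_algC.
by rewrite (leq_trans (size_polyC_leq1 a)) // ltnW.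
Qed.

Lemma coord_poly_pow1 : coord_poly v = 'X.
Proof.
by apply/esym/coord_poly_unique; rewrite ?size_polyX ?horner_algX.
Qed.

Lemma horner_pow_eq0 p : horner_alg v p = 0 -> ('X^n - c%:P) %| p.
Proof.
move=> pv0; have n_gt0 := ltnW n_gt1.
have mv0 : horner_alg v ('X^n - c%:P) = 0.
  by rewrite rmorphB /= rmorphXn /= horner_algX horner_algC vn subrr.
rewrite /dvdp -coord_poly0; apply/eqP/coord_poly_unique.
  by rewrite -ltnS -(size_XnsubC c n_gt0) ltn_modp -size_poly_eq0 size_XnsubC.
move/(congr1 (horner_alg v)): (divp_eq p ('X^n - c%:P)).
by rewrite pv0 rmorphD rmorphM /= mv0 mulr0 add0r.
Qed.

Section PowVertexMap.
Variables (A : algType F) (e s : A).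
Hypotheses (e_idem : e * e = e) (e_s : e * s = s) (s_e : s * e = s) (sn : s ^+ n = c *: e).

(* Through the basis of powers of v, E is F[X]/(X^n - c); evaluation at s in
   the corner algebra eAe, where s^n = c e, factors through it. *)
Definition pow_vertex_map x := e * horner_alg s (coord_poly x).

Lemma idem_horner_comm p : e * horner_alg s p = horner_alg s p * e.
Proof.
elim/poly_ind: p => [|p a IHp]; first by rewrite rmorph0 mulr0 mul0r.
rewrite rmorphD rmorphM /= horner_algX horner_algC mulrDr mulrDl mulrA IHp.
by rewrite -!mulrA e_s s_e mulr_algr mulr_algl.
Qed.

Lemma idem_hornerM p q :
  e * horner_alg s (p * q) = (e * horner_alg s p) * (e * horner_alg s q).
Proof. by rewrite rmorphM /= mulrA -(mulrA e) -idem_horner_comm mulrA e_idem mulrA. Qed.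

Lemma idem_horner_pow_eq0 : e * horner_alg s ('X^n - c%:P) = 0.
Proof.
rewrite rmorphB /= rmorphXn /= horner_algX horner_algC mulrBr mulr_algr.
by rewrite -(prednK (ltnW n_gt1)) exprS mulrA e_s -exprS (prednK (ltnW n_gt1)) sn subrr.
Qed.

Lemma pow_vertex_map1 : pow_vertex_map 1 = e.
Proof. by rewrite /pow_vertex_map -(scale1r 1) coord_poly_alg horner_algC scale1r mulr1. Qed.

Lemma pow_vertex_map_pow1 : pow_vertex_map v = s.
Proof. by rewrite /pow_vertex_map coord_poly_pow1 horner_algX e_s. Qed.

Lemma pow_vertex_map_is_vertex_map : vertex_map fullv pow_vertex_map.
Proof.
split=> [x y _ _|x y _ _|a].
- by rewrite /pow_vertex_map coord_polyD rmorphD mulrDr.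
- have /dvdpP[q xy_q] : ('X^n - c%:P) %| coord_poly (x * y) - coord_poly x * coord_poly y.
    by apply: horner_pow_eq0; rewrite rmorphB rmorphM /= !horner_coord_poly_pow subrr.
  rewrite /pow_vertex_map -idem_hornerM -(subrK (coord_poly x * coord_poly y) (coord_poly (x * y))).
  by rewrite xy_q rmorphD /= mulrDr !idem_hornerM idem_horner_pow_eq0 mulr0 add0r.
- by rewrite pow_vertex_map1 /pow_vertex_map coord_poly_alg horner_algC mulr_algr.
Qed.

End PowVertexMap.

Lemma falg_hom_pow_vertex_map (A C : algType F) (k : A -> C) (e s : A) (psi : E -> C) :
  falg_hom k -> vertex_map fullv psi -> k e = psi 1 -> k s = psi v ->
  forall x, k (pow_vertex_map e s x) = psi x.
Proof.
move=> k_hom psi_vm ke ks x.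
rewrite /pow_vertex_map horner_alg_comb mulr_sumr (falg_hom_sum k_hom) (vertex_map_powE psi_vm).
apply: eq_bigr => i _.
by rewrite -scalerAr (falg_homZ k_hom) (falg_homM k_hom) (falg_homX k_hom) ke ks.
Qed.

End PowerBasis.

Section Degree4Datum.
Variables (F : fieldType) (E : splittingFieldType F).
Variables (rho : gal_of (fullv : {vspace E})) (zeta : F) (v : E).
Hypothesis datum : degree4_datum rho zeta v.
Local Notation L := (LL v).
Local Notation u := (uu v).

Lemma zeta_prim : 4.-primitive_root zeta. Proof. by case: datum => _ []. Qed.
Lemma v_neq0 : v != 0. Proof. by case: datum => _ []. Qed.
Lemma rho_v : rho v = zeta%:A * v. Proof. by case: datum => _ []. Qed.

Lemma rhoX_v (k : nat) : (rho ^+ k)%g v = (zeta ^+ k)%:A * v.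
Proof. exact: (gal_expg_eigen rho_v k). Qed.

Lemma zeta_sqr : zeta ^+ 2 = -1.
Proof.
have z2_neq1 : zeta ^+ 2 != 1 by rewrite -(expr0 zeta) (eq_prim_root_expr zeta_prim).
have : (zeta ^+ 2 - 1) * (zeta ^+ 2 + 1) = 0.
  by rewrite -subr_sqr -exprM (prim_expr_order zeta_prim) expr1n subrr.
by move/eqP; rewrite mulf_eq0 subr_eq0 (negPf z2_neq1) addr_eq0 => /eqP.
Qed.

Lemma zetaX_neq0 k : zeta ^+ k != 0.
Proof. by rewrite expf_neq0 // (prim_root_eq0 zeta_prim). Qed.

Lemma two_neq0 : (2%:R : F) != 0.
Proof. exact: (prim_root_dvd_eq0 (m := 2) zeta_prim isT). Qed.

Lemma pow4_basis : basis_of fullv (pow_tuple v 4).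
Proof.
have [[_ dimE _] _] := datum.
by rewrite basisEfree (free_pow_eigen zeta_prim v_neq0 rho_v) subvf dimE size_tuple.
Qed.

Lemma pow4_scalar : exists c : F, v ^+ 4 = c%:A.
Proof.
have [[galE _ GalE] _] := datum.
suff : v ^+ 4 \in fixedField ('Gal(fullv / 1%VS))%g.
  by rewrite (galois_fixedField galE) => /vlineP[c ->]; exists c.
apply/fixedFieldP; rewrite ?memvf // GalE => _ /cycleP[k ->].
rewrite rmorphXn /= rhoX_v exprMn exprZn expr1n -exprM mulnC exprM.
by rewrite (prim_expr_order zeta_prim) expr1n scale1r mul1r.
Qed.

Lemma rhoX_u k : (rho ^+ k)%g u = ((zeta ^+ k) ^+ 2) *: u.
Proof. by rewrite rmorphXn /= rhoX_v exprMn exprZn expr1n mulr_algl. Qed.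

Lemma mem1L : 1 \in L.
Proof. exact: subvP (subv_adjoin _ _) _ (memv_line 1). Qed.

Lemma memuL : u \in L.
Proof. exact: memv_adjoin. Qed.

Lemma memL_comb c0 c2 : c0%:A + c2 *: u \in L.
Proof. by rewrite memvD ?memvZ ?mem1L ?memuL. Qed.

Lemma rho2_fixL z : z \in L -> (rho ^+ 2)%g z = z.
Proof.
suff /subvP/(_ z) : (L <= fixedField [set (rho ^+ 2)%g])%VS.
  by move=> /[apply] /mem_fixedFieldP[_]; apply; rewrite inE.
apply/FadjoinP; split; first exact: sub1v.
apply/fixedFieldP; rewrite ?memvf // => _ /set1P ->.
by rewrite rhoX_u zeta_sqr sqrrN expr1n scale1r.
Qed.

Lemma memLP z : z \in L -> exists c0 c2 : F, z = c0%:A + c2 *: u.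
Proof.
move=> Lz.
have coord_sign i : coord (pow_tuple v 4) i z = coord (pow_tuple v 4) i z * (-1) ^+ i.
  by rewrite -zeta_sqr -(coord_pow_eigen pow4_basis (rhoX_v 2)) rho2_fixL.
have odd_coord0 (i : 'I_4) : odd i -> coord (pow_tuple v 4) i z = 0.
  move=> i_odd; apply/eqP; move: (coord_sign i).
  rewrite -signr_odd i_odd expr1 mulrN1 => /eqP.
  by rewrite -addr_eq0 -mulr2n -mulr_natr mulf_eq0 (negPf two_neq0) orbF.
rewrite {1}(coord_powE pow4_basis z) !big_ord_recl big_ord0 /=.
rewrite (odd_coord0 (lift ord0 ord0)) // (odd_coord0 (lift ord0 (lift ord0 (lift ord0 ord0)))) //.
by rewrite !scale0r add0r !addr0 expr0; do 2!eexists.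
Qed.

Lemma rhoX_L k z : z \in L -> (rho ^+ k)%g z \in L.
Proof.
move=> /memLP[c0 [c2 ->]].
by rewrite linearD !linearZ /= rmorph1 rhoX_u scalerA memL_comb.
Qed.

Lemma rhoX_addn2_L k z : z \in L -> (rho ^+ (k + 2))%g z = (rho ^+ k)%g z.
Proof. by move=> Lz; rewrite expgD galM ?memvf // rho2_fixL // rhoX_L. Qed.

Lemma invuL : u^-1 \in L.
Proof.
have [c v4] := pow4_scalar.
have u_neq0 : u != 0 by rewrite expf_neq0 // v_neq0.
have uu_c : u * u = c%:A by rewrite -exprD.
have c_neq0 : c != 0.
  by apply/eqP => c0; move: uu_c; rewrite c0 scale0r => /eqP; rewrite mulf_eq0 orbb (negPf u_neq0).
suff -> : u^-1 = c^-1 *: u by rewrite memvZ ?memuL.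
apply: (mulfI u_neq0); rewrite mulfV // -scalerAr uu_c scalerA mulVf ?scale1r //.
Qed.

Lemma rhoX_inv_v_addn2 k :
  ((rho ^+ (k + 2))^-1)%g v^-1 = - ((rho ^+ k)^-1)%g v^-1.
Proof.
have rho2_inv : ((rho ^+ 2)^-1)%g v^-1 = - v^-1.
  have rho2_inv_v : (rho ^+ 2)%g (- v^-1) = v^-1.
    by rewrite rmorphN fmorphV /= rhoX_v zeta_sqr scaleN1r mulN1r invrN opprK.
  by rewrite -{1}rho2_inv_v -galM ?memvf // mulgV gal_id.
by rewrite expgD invMg galM ?memvf // rho2_inv rmorphN.
Qed.

Lemma vertex_map_L_comb (A : algType F) (psi : E -> A) : vertex_map L psi ->
  forall c0 c2, psi (c0%:A + c2 *: u) = c0 *: psi 1 + c2 *: psi u.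
Proof.
move=> psi_vm c0 c2; have [psiD _ psiA] := psi_vm.
by rewrite psiD ?rpredZ ?mem1L ?memuL // psiA (vertex_mapZ psi_vm) ?mem1L ?memuL.
Qed.

Lemma vertex_map_L_eq (A : algType F) (psi chi : E -> A) :
  vertex_map L psi -> vertex_map L chi -> psi 1 = chi 1 -> psi u = chi u ->
  {in L, psi =1 chi}.
Proof.
move=> psi_vm chi_vm psi1 psiu z /memLP[c0 [c2 ->]].
by rewrite !vertex_map_L_comb // psi1 psiu.
Qed.

Lemma vertex_map_L_extend (A : algType F) (psi : E -> A) (s : A) :
  vertex_map L psi -> psi 1 * s = s -> s * psi 1 = s -> s * s = psi u ->
  let phi := pow_vertex_map v 4 (psi 1) s in
  [/\ vertex_map fullv phi, phi v = s & {in L, phi =1 psi}].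
Proof.
move=> psi_vm e_s s_e ss phi; have [c v4] := pow4_scalar.
have e_idem := vertex_map_idem psi_vm mem1L.
have s4 : s ^+ 4 = c *: psi 1.
  have [_ psiM psiA] := psi_vm.
  by rewrite (exprD s 2 2) expr2 ss -psiM ?memuL // -exprD v4 psiA.
have phi_vm : vertex_map fullv phi :=
  pow_vertex_map_is_vertex_map pow4_basis isT v4 e_idem e_s s_e s4.
have phi_v : phi v = s := pow_vertex_map_pow1 pow4_basis isT e_s.
split=> //; apply: vertex_map_L_eq => //; first exact: vertex_map_sub.
  exact: (pow_vertex_map1 pow4_basis isT (psi 1) s : phi 1 = _).
by rewrite -ss -phi_v -(vertex_mapM phi_vm).
Qed.

End Degree4Datum.

Section Presentations.
Variables (F : fieldType) (E : splittingFieldType F).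
Variables (rho : gal_of (fullv : {vspace E})) (zeta : F) (v : E).
Hypothesis datum : degree4_datum rho zeta v.
Variables (xa xb xg : 'Z_2) (l : nat).
Hypothesis l_xb : l = xb :> nat.
Local Notation L := (LL v).
Local Notation u := (uu v).

Definition Lambda_gens (C : algType F) (d : gens1 E C) : gens2 E C :=
  Gens2 (p1 d) (p2 d) (p3 d) (ar_a d) (ar_b0 d + ar_b1 d) (ar_g d) (p2 d v) (p3 d v).

Lemma gamma_alpha_eq0 (C : algType F) (d : gens1 E C) :
  rels1 rho v xa xb xg l d -> ar_g d * ar_a d = 0.
Proof.
move=> [[p1_vm _ p3_vm _] [_ _ _ g_corner] _ [_ half_l half_l2 _]].
set ga := ar_g d * ar_a d.
set y := p3 d (((rho ^+ l)^-1)%g v^-1) * ar_g d * ar_a d * p2 d v.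
have half_inv : (2%:R^-1 : E) = (2%:R^-1 : F)%:A by rewrite -in_algE fmorphV rmorph_nat.
have [p3_1g _] :=
  corner_idem (vertex_map_idem p3_vm (memvf 1)) (vertex_map_idem p1_vm (mem1L v)) g_corner.
have half_l2' : p3 d 2%:R^-1 * (ga - y) = 0.
  by move: half_l2; rewrite (rhoX_inv_v_addn2 datum) (vertex_mapN p3_vm) !mulNr.
have : p3 d 2%:R^-1 * (ga + y) + p3 d 2%:R^-1 * (ga - y) = 0 by rewrite half_l half_l2' addr0.
rewrite -mulrDr addrACA subrr addr0 half_inv.
case: p3_vm => _ _ ->.
rewrite -scalerAl mulrDr /ga mulrA p3_1g -mulr2n -scaler_nat scalerA.
by rewrite mulVf ?(two_neq0 datum) ?scale1r.
Qed.

Lemma Lambda_gens_rels (C : algType F) (d : gens1 E C) :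
  rels1 rho v xa xb xg l d -> rels2 rho v xa xb xg (Lambda_gens d).
Proof.
move=> rels_d; have ga0 := gamma_alpha_eq0 rels_d.
move: rels_d => [[p1_vm p2_vm p3_vm idems] [a_corner b0_corner b1_corner g_corner]
  [a_rel b0_rel b1_rel g_rel] [bg0 _ _ ab0]].
have p_corner (p : E -> C) : vertex_map fullv p -> p v = p 1 * p v * p 1.
  by move=> p_vm; rewrite (vertex_map1l p_vm) ?(vertex_map1r p_vm) ?memvf.
have p_comm (p : E -> C) : vertex_map fullv p -> {in L, forall z, p v * p z = p z * p v}.
  by move=> p_vm z _; rewrite -!(vertex_mapM p_vm) mulrC.
have p_sqr (p : E -> C) : vertex_map fullv p -> p v * p v - p u = 0.
  by move=> p_vm; rewrite -(vertex_mapM p_vm) subrr.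
split=> /=.
- by split=> //; apply: vertex_map_sub.
- split=> //; try exact: p_corner.
  by rewrite mulrDr mulrDl -b0_corner -b1_corner.
- split=> //; try exact: p_comm.
  move=> z Lz.
  by rewrite mulrDl b0_rel b1_rel (rhoX_addn2_L datum) // -l_xb mulrDr.
- by split; rewrite ?p_sqr.
Qed.

Section BetaHalves.
Variables (C : algType F) (d : gens2 E C).
Local Notation e2 := (q2 d 1).
Local Notation e3 := (q3 d 1).
Local Notation b := (br_b d).
Local Notation s2 := (br_s2 d).
Local Notation s3 := (br_s3 d).
Local Notation w := (zeta ^+ l).

(* The projections of b onto the (+-1)-eigenspaces of the involution
   x |-> w^-1 u^-1 s2 x s3 of e2 C e3. *)
Definition beta_half (sg : F) : C :=
  2%:R^-1 *: (b + sg *: (w^-1 *: (q2 d u^-1 * s2 * b * s3))).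

Lemma beta_half_sum : beta_half 1 + beta_half (-1) = b.
Proof.
rewrite /beta_half -scalerDr scale1r scaleN1r addrACA subrr addr0.
by rewrite -mulr2n -scaler_nat scalerA mulVf ?(two_neq0 datum) ?scale1r.
Qed.

Hypothesis rels_d : rels2 rho v xa xb xg d.

Lemma beta_half_corner sg : beta_half sg = e2 * beta_half sg * e3.
Proof.
have [[_ q2_vm q3_vm _] [_ b_corner _ s2_corner s3_corner] _ _] := rels_d.
have [e2_b b_e3] := corner_idem (vertex_map_idem q2_vm (mem1L v))
  (vertex_map_idem q3_vm (mem1L v)) b_corner.
have [_ s3_e3] := corner_idem (vertex_map_idem q3_vm (mem1L v))
  (vertex_map_idem q3_vm (mem1L v)) s3_corner.
have e2_Qi : e2 * q2 d u^-1 = q2 d u^-1 by rewrite (vertex_map1l q2_vm) ?mem1L ?(invuL datum).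
rewrite /beta_half -scalerAr -scalerAl mulrDr mulrDl e2_b b_e3.
by rewrite -!(scalerAr, scalerAl) !mulrA e2_Qi -(mulrA _ s3) s3_e3.
Qed.

Lemma beta_half_shift sg : sg * sg = 1 ->
  beta_half sg * s3 = (sg * w) *: (s2 * beta_half sg).
Proof.
move=> sg_sqr.
have [[_ q2_vm q3_vm _] [_ b_corner _ s2_corner _] [_ b_rel _ s2_comm _]
  [_ _ _ s2_sqr s3_sqr]] := rels_d.
have w_neq0 : w != 0 := zetaX_neq0 datum l.
move/eqP: s2_sqr; move/eqP: s3_sqr; rewrite !subr_eq0 => /eqP s3_sqr /eqP s2_sqr.
have e2_idem := vertex_map_idem q2_vm (mem1L v).
have [e2_b _] := corner_idem e2_idem (vertex_map_idem q3_vm (mem1L v)) b_corner.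
have [e2_s2 _] := corner_idem e2_idem e2_idem s2_corner.
have Qi_Q : q2 d u^-1 * q2 d u = e2.
  have [_ q2M _] := q2_vm.
  by rewrite -q2M ?(invuL datum) ?memuL // mulVf // expf_neq0 // (v_neq0 datum).
have b_Q3 : b * q3 d u = w ^+ 2 *: (q2 d u * b).
  rewrite b_rel ?memuL // (rhoX_u datum) -l_xb.
  by rewrite (vertex_mapZ q2_vm) ?mem1L ?memuL // scalerAl.
have s2_Qi : s2 * q2 d u^-1 = q2 d u^-1 * s2 by rewrite s2_comm ?(invuL datum).
have M_s3 : q2 d u^-1 * s2 * b * s3 * s3 = w ^+ 2 *: (s2 * b).
  rewrite -mulrA s3_sqr -mulrA b_Q3 -scalerAr -s2_sqr !mulrA.
  by rewrite -(mulrA (q2 d u^-1) s2 s2) s2_sqr Qi_Q e2_s2.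
have s2_M : s2 * (q2 d u^-1 * s2 * b * s3) = b * s3.
  by rewrite !mulrA s2_Qi -(mulrA (q2 d u^-1) s2 s2) s2_sqr Qi_Q e2_b.
rewrite /beta_half -scalerAl mulrDl -!scalerAl M_s3 -scalerAr mulrDr -!scalerAr s2_M.
rewrite !scalerA !scalerDr !scalerA addrC; congr (_ *: _ + _ *: _).
  by field; rewrite w_neq0 (two_neq0 datum).
have sg_neq0 : sg != 0 by apply: contra_eq_neq sg_sqr => ->; rewrite mul0r eq_sym oner_neq0.
by rewrite -[LHS]mul1r -sg_sqr; field; rewrite w_neq0 (two_neq0 datum) sg_neq0.
Qed.

End BetaHalves.

Definition Lambda'_gens (C : algType F) (d : gens2 E C) : gens1 E C :=
  Gens1 (q1 d) (pow_vertex_map v 4 (q2 d 1) (br_s2 d)) (pow_vertex_map v 4 (q3 d 1) (br_s3 d))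
    (br_a d) (beta_half d 1) (beta_half d (-1)) (br_g d).

Lemma Lambda'_gens_vertex (C : algType F) (d : gens2 E C) :
  rels2 rho v xa xb xg d ->
  [/\ vertex_map fullv (p2 (Lambda'_gens d)), p2 (Lambda'_gens d) v = br_s2 d
     & {in L, p2 (Lambda'_gens d) =1 q2 d}] /\
  [/\ vertex_map fullv (p3 (Lambda'_gens d)), p3 (Lambda'_gens d) v = br_s3 d
     & {in L, p3 (Lambda'_gens d) =1 q3 d}].
Proof.
move=> [[_ q2_vm q3_vm _] [_ _ _ s2_corner s3_corner] _ [_ _ _ s2_sqr s3_sqr]].
have e2_idem := vertex_map_idem q2_vm (mem1L v).
have e3_idem := vertex_map_idem q3_vm (mem1L v).
have [e2_s2 s2_e2] := corner_idem e2_idem e2_idem s2_corner.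
have [e3_s3 s3_e3] := corner_idem e3_idem e3_idem s3_corner.
move/eqP: s2_sqr; move/eqP: s3_sqr; rewrite !subr_eq0 => /eqP s3_sqr /eqP s2_sqr.
by split; [apply: (vertex_map_L_extend datum q2_vm) | apply: (vertex_map_L_extend datum q3_vm)].
Qed.

Lemma Lambda'_gens_rels (C : algType F) (d : gens2 E C) :
  rels2 rho v xa xb xg d -> rels1 rho v xa xb xg l (Lambda'_gens d).
Proof.
move=> rels_d; have [[q1_vm q2_vm q3_vm idems] [a_corner _ g_corner _ _]
  [a_rel _ g_rel _ _] [ab0 bg0 ga0 _ _]] := rels_d.
have e2_idem := vertex_map_idem q2_vm (mem1L v).
have e3_idem := vertex_map_idem q3_vm (mem1L v).
have [[P2_vm P2_v P2_L] [P3_vm P3_v P3_L]] := Lambda'_gens_vertex rels_d.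
rewrite /Lambda'_gens /= in P2_vm P2_v P2_L P3_vm P3_v P3_L *.
set P2 := pow_vertex_map _ _ _ _ in P2_vm P2_v P2_L *.
set P3 := pow_vertex_map _ _ _ _ in P3_vm P3_v P3_L *.
have P2_1 : P2 1 = q2 d 1 by rewrite P2_L ?mem1L.
have P3_1 : P3 1 = q3 d 1 by rewrite P3_L ?mem1L.
have beta_twist sg k : sg * sg = 1 -> zeta ^+ k = sg * zeta ^+ l ->
    forall z, beta_half d sg * P3 z = P2 ((rho ^+ k)%g z) * beta_half d sg.
  move=> sg_sqr zeta_k.
  have [e2_beta beta_e3] := corner_idem e2_idem e3_idem (beta_half_corner rels_d sg).
  apply: (vertex_map_twist (pow4_basis datum) (rhoX_v datum k)) => //.
  - by rewrite P2_1.
  - by rewrite P3_1.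
  - by rewrite P2_v P3_v zeta_k beta_half_shift.
split=> /=.
- by split; rewrite ?P2_1 ?P3_1.
- by split; rewrite ?P2_1 ?P3_1 //; apply: beta_half_corner.
- split.
  + by move=> z Lz; rewrite P2_L ?a_rel.
  + by apply: beta_twist; rewrite ?mulr1 ?mul1r.
  + by apply: beta_twist; rewrite ?mulrNN ?mulr1 // exprD (zeta_sqr datum) mulrN1 mulN1r.
  + by move=> z Lz; rewrite P3_L ?g_rel ?(rhoX_L datum).
- split; rewrite ?beta_half_sum //.
  + by rewrite ga0 add0r -(mulrA (P3 _)) ga0 mulr0 mul0r mulr0.
  + by rewrite ga0 add0r -(mulrA (P3 _)) ga0 mulr0 mul0r mulr0.
Qed.

Lemma Lambda'_gens_hom (C D : algType F) (dC : gens2 E C) (dD : gens1 E D) (k : C -> D) :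
  rels1 rho v xa xb xg l dD -> falg_hom k -> agree2 v k dC (Lambda_gens dD) ->
  agree1 v k (Lambda'_gens dC) dD.
Proof.
move=> rels_dD k_hom [/= k_q1 k_q2 k_q3 [/= k_a k_b k_g k_s2 k_s3]].
have [[_ p2_vm p3_vm _] [_ b0_corner b1_corner _] [_ b0_rel b1_rel _] _] := rels_dD.
set w := zeta ^+ l; have w_neq0 : w != 0 := zetaX_neq0 datum l.
have e2_idem := vertex_map_idem p2_vm (memvf 1).
have e3_idem := vertex_map_idem p3_vm (memvf 1).
have [e2_b0 _] := corner_idem e2_idem e3_idem b0_corner.
have [e2_b1 _] := corner_idem e2_idem e3_idem b1_corner.
have Qi_t_t : p2 dD u^-1 * p2 dD v * p2 dD v = p2 dD 1.
  by rewrite -!(vertex_mapM p2_vm) -mulrA -expr2 mulVf // expf_neq0 // (v_neq0 datum).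
have b0_t : ar_b0 dD * p3 dD v = w *: (p2 dD v * ar_b0 dD).
  by rewrite b0_rel (rhoX_v datum) mulr_algl (vertex_mapZ p2_vm) ?memvf // -scalerAl.
have b1_t : ar_b1 dD * p3 dD v = - w *: (p2 dD v * ar_b1 dD).
  rewrite b1_rel (rhoX_v datum) exprD (zeta_sqr datum) mulrN1 mulr_algl.
  by rewrite (vertex_mapZ p2_vm) ?memvf // -scalerAl.
have M_eq : w^-1 *: (p2 dD u^-1 * p2 dD v * (ar_b0 dD + ar_b1 dD) * p3 dD v) =
    ar_b0 dD - ar_b1 dD.
  rewrite mulrDr mulrDl -!(mulrA (_ * p2 dD v)) b0_t b1_t -!scalerAr !mulrA Qi_t_t e2_b0 e2_b1.
  by rewrite scalerDr !scalerA mulrN mulVf // scale1r scaleN1r.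
have k_beta sg :
    k (beta_half dC sg) = 2%:R^-1 *: ((ar_b0 dD + ar_b1 dD) + sg *: (ar_b0 dD - ar_b1 dD)).
  rewrite /beta_half !(falg_homZ k_hom, falg_homD k_hom, falg_homM k_hom).
  by rewrite k_b k_s2 k_s3 k_q2 ?(invuL datum) // M_eq.
split=> //=.
- apply: (falg_hom_pow_vertex_map (pow4_basis datum) k_hom p2_vm) => //.
  by rewrite k_q2 ?mem1L.
- apply: (falg_hom_pow_vertex_map (pow4_basis datum) k_hom p3_vm) => //.
  by rewrite k_q3 ?mem1L.
have half_twice (x : D) : 2%:R^-1 *: (x + x) = x.
  by rewrite -mulr2n -scaler_nat scalerA mulVf ?(two_neq0 datum) ?scale1r.
split=> //; rewrite k_beta.
- by rewrite scale1r addrACA subrr addr0 half_twice.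
- by rewrite scaleN1r opprB addrC addrA subrK half_twice.
Qed.

Lemma Lambda_gens_hom (C D : algType F) (dC : gens1 E C) (dD : gens2 E D) (h : C -> D) :
  rels2 rho v xa xb xg dD -> falg_hom h -> agree1 v h dC (Lambda'_gens dD) ->
  agree2 v h (Lambda_gens dC) dD.
Proof.
move=> rels_dD h_hom [/= h_p1 h_p2 h_p3 [/= h_a h_b0 h_b1 h_g]].
have [[_ P2_v P2_L] [_ P3_v P3_L]] := Lambda'_gens_vertex rels_dD.
split=> /=.
- exact: h_p1.
- by move=> z Lz; rewrite h_p2; apply: P2_L.
- by move=> z Lz; rewrite h_p3; apply: P3_L.
- split=> //; first by rewrite (falg_homD h_hom) h_b0 h_b1; apply: beta_half_sum.
  + by rewrite h_p2; apply: P2_v.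
  + by rewrite h_p3; apply: P3_v.
Qed.

End Presentations.

Section Agreement.
Variables (F : fieldType) (E : splittingFieldType F) (v : E) (A B C : algType F).
Variables (f : A -> B) (g : B -> C).

Lemma agree1_comp (dA : gens1 E A) (dB : gens1 E B) (dC : gens1 E C) :
  agree1 v f dA dB -> agree1 v g dB dC -> agree1 v (g \o f) dA dC.
Proof.
move=> [f1 f2 f3 [fa fb0 fb1 fg]] [g1 g2 g3 [ga gb0 gb1 gg]].
split=> [x Lx|x|x|] /=; rewrite ?f1 ?g1 ?f2 ?g2 ?f3 ?g3 //.
by split; rewrite /= ?fa ?fb0 ?fb1 ?fg.
Qed.

Lemma agree2_comp (dA : gens2 E A) (dB : gens2 E B) (dC : gens2 E C) :
  agree2 v f dA dB -> agree2 v g dB dC -> agree2 v (g \o f) dA dC.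
Proof.
move=> [f1 f2 f3 [fa fb fg fs2 fs3]] [g1 g2 g3 [ga gb gg gs2 gs3]].
split=> [x Lx|x Lx|x Lx|] /=; rewrite ?f1 ?g1 ?f2 ?g2 ?f3 ?g3 //.
by split; rewrite /= ?fa ?fb ?fg ?fs2 ?fs3.
Qed.

End Agreement.

Section UniversalProperty.
Variables (F : fieldType) (E : splittingFieldType F).
Variables (rho : gal_of (fullv : {vspace E})) (v : E) (xa xb xg : 'Z_2) (l : nat).

Lemma is_Lambda'_endo_id (B : algType F) (d : gens1 E B) (f : B -> B) :
  is_Lambda' rho v xa xb xg l d -> falg_hom f -> agree1 v f d d -> f =1 id.
Proof.
move=> [rels_d univ] f_hom f_agree; have [_ uniq] := univ B d rels_d.
by apply: uniq => //; split=> //; split.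
Qed.

Lemma is_Lambda_endo_id (B : algType F) (d : gens2 E B) (f : B -> B) :
  is_Lambda rho v xa xb xg d -> falg_hom f -> agree2 v f d d -> f =1 id.
Proof.
move=> [rels_d univ] f_hom f_agree; have [_ uniq] := univ B d rels_d.
by apply: uniq => //; split=> //; split.
Qed.

End UniversalProperty.

Theorem proposition4p3 (F : fieldType) (E : splittingFieldType F)
    (rho : gal_of (fullv : {vspace E})) (zeta : F) (v : E)
    (datum : degree4_datum rho zeta v)
    (xa xb xg : 'Z_2) (hxi : xa + xb + xg = 0)
    (l : nat) (hl : (l < 2)%N) (hlb : (l = xb %[mod 2])%N)
    (B' : algType F) (d' : gens1 E B') (HB' : is_Lambda' rho v xa xb xg l d')
    (B : algType F) (d : gens2 E B) (HB : is_Lambda rho v xa xb xg d) :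
  exists f : B' -> B,
    [/\ falg_hom f, bijective f,
        f (p2 d' v) = br_s2 d /\ f (p3 d' v) = br_s3 d,
        f (ar_a d') = br_a d /\ f (ar_g d') = br_g d &
        f (ar_b0 d' + ar_b1 d') = br_b d].
Proof.
have l_xb : l = xb :> nat by rewrite -(modn_small hl) hlb modn_small.
have [[rels_d' univ'] [rels_d univ]] := (HB', HB).
have [[k [k_hom k_agree]] _] := univ _ _ (Lambda_gens_rels datum l_xb rels_d').
have [[h [h_hom h_agree]] _] := univ' _ _ (Lambda'_gens_rels datum l_xb rels_d).
have h_gens := Lambda_gens_hom datum rels_d h_hom h_agree.
have hK : cancel h k.
  apply: is_Lambda'_endo_id HB' (falg_hom_comp h_hom k_hom) _.
  exact: agree1_comp h_agree (Lambda'_gens_hom datum rels_d' k_hom k_agree).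
have kK : cancel k h.
  exact: is_Lambda_endo_id HB (falg_hom_comp k_hom h_hom) (agree2_comp k_agree h_gens).
have [_ _ _ [h_a h_b h_g h_s2 h_s3]] := h_gens.
by exists h; split=> //; exists k.
Qed.
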